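(* Let $k$ be a field and $d\in\mathbb{N}$. Consider the morphisms $$\mathrm{d}\beta_d:Q_d\times\mathcal{L}\mathbb{G}_m\times A_d\times\mathcal{L}\mathbb{A}^1\to Q_d\times\mathcal{L}\mathbb{G}_m\times\mathcal{L}\mathbb{A}^1,\quad (q,u,a,v)\mapsto(q,u,ua+qv),$$ $$\alpha_d:Q_d\times A_d\times\mathcal{L}\mathbb{A}^1\to Q_d\times\mathcal{L}\mathbb{A}^1,\quad (q,a,v)\mapsto(q,qv+a).$$ Both are surjective on $k$-points and induce formally smooth morphisms on formal completions at $k$-points. At $k$-points lying over $q=t^d$, they induce isomorphisms on formal completions.
   Context: $Q_d$ is the affine space of monic polynomials of degree $d$ in $R[t]$; $A_d$ is the $d$-dimensional affine space of polynomials of degree $<d$ in $R[t]$; $\mathcal{L}\mathbb{A}^1$ represents $R\mapsto R[[t]]$; $\mathcal{L}\mathbb{G}_m$ represents $R\mapsto R[[t]]^\times$. Formal smoothness refers to the infinitesimal lifting property for Artinian local $k$-algebras. *)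

From HB Require Import structures.
From mathcomp Require Import all_boot all_order all_algebra.
Set Implicit Arguments. Unset Strict Implicit. Unset Printing Implicit Defensive.
Import GRing.Theory.
Local Open Scope ring_scope.

(* Functors of points on commutative rings, given as a carrier, a         *)
(* predicate cutting out the actual points, and base change along a map.  *)
Record pfun := PFun {
  pt : comNzRingType -> Type;
  ok : forall R : comNzRingType, pt R -> Prop;
  bc : forall R S : comNzRingType, (R -> S) -> pt R -> pt S }.

(* Artinian local k-algebras with residue field k, presented as a        *)
(* finite-dimensional k-algebra A with a k-algebra map eps : A -> k       *)
(* (the residue map) whose kernel (the maximal ideal) is nil.             *)
Definition art_k (k : fieldType) (A : comAlgType k) (eps : A -> k) : Prop :=
  [/\ (forall a b : A, eps (a + b) = eps a + eps b) /\
      (forall a b : A, eps (a * b) = eps a * eps b),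
      eps 1 = 1,
      (forall (c : k) (a : A), eps (c *: a) = c * eps a),
      (forall a : A, eps a = 0 -> exists n : nat, a ^+ n = 0) &
      (exists s : seq A, forall a : A,
          exists cs : seq k, a = \sum_(i < size s) cs`_i *: s`_i)].

(* Formal completion of X at the k-point x, evaluated on (A, eps). *)
Definition hat (X : pfun) (k : fieldType) (x : pt X k)
    (A : comAlgType k) (eps : A -> k) (y : pt X A) : Prop :=
  ok y /\ bc eps y = x.

Definition surj_kpts (X Y : pfun) (f : forall R, pt X R -> pt Y R)
    (k : fieldType) : Prop :=
  forall y : pt Y k, ok y -> exists x : pt X k, ok x /\ f k x = y.

Definition fsmooth_hat (X Y : pfun) (f : forall R, pt X R -> pt Y R)
    (k : fieldType) (x : pt X k) : Prop :=
  forall (A B : comAlgType k) (epsA : A -> k) (epsB : B -> k)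
         (phi : {lrmorphism A -> B}),
    art_k epsA -> art_k epsB -> (forall b : B, exists a : A, phi a = b) ->
    forall (yB : pt X B) (zA : pt Y A),
      hat x epsB yB -> hat (f k x) epsA zA -> f B yB = bc phi zA ->
      exists yA : pt X A,
        [/\ hat x epsA yA, bc phi yA = yB & f A yA = zA].

Definition iso_hat (X Y : pfun) (f : forall R, pt X R -> pt Y R)
    (k : fieldType) (x : pt X k) : Prop :=
  forall (A : comAlgType k) (eps : A -> k), art_k eps ->
    [/\ (forall y : pt X A, hat x eps y -> hat (f k x) eps (f A y)),
        (forall y1 y2 : pt X A, hat x eps y1 -> hat x eps y2 ->
            f A y1 = f A y2 -> y1 = y2) &
        (forall z : pt Y A, hat (f k x) eps z ->
            exists y : pt X A, hat x eps y /\ f A y = z)].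

(* Power series R[[t]] as coefficient sequences, polynomials inside them. *)
Definition ser_add (R : comNzRingType) (f g : nat -> R) : nat -> R :=
  fun n => f n + g n.
Definition ser_mul (R : comNzRingType) (f g : nat -> R) : nat -> R :=
  fun n => \sum_(i < n.+1) f i * g (n - i)%N.
Definition ser_of_poly (R : comNzRingType) (p : {poly R}) : nat -> R :=
  fun n => p`_n.

Definition isQ (d : nat) (R : comNzRingType) (q : {poly R}) : Prop :=
  q \is monic /\ size q = d.+1.
Definition isA (d : nat) (R : comNzRingType) (a : {poly R}) : Prop :=
  (size a <= d)%N.
Definition isGm (R : comNzRingType) (u : nat -> R) : Prop :=
  exists w : R, u 0%N * w = 1.

Definition Xbeta (d : nat) : pfun := @PFun
  (fun R => ({poly R} * (nat -> R) * {poly R} * (nat -> R))%type)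
  (fun R x => let: (q, u, a, v) := x in [/\ isQ d q, isGm u & isA d a])
  (fun R S phi x => let: (q, u, a, v) := x in
     (map_poly phi q, phi \o u, map_poly phi a, phi \o v)).

Definition Ybeta (d : nat) : pfun := @PFun
  (fun R => ({poly R} * (nat -> R) * (nat -> R))%type)
  (fun R y => let: (q, u, w) := y in isQ d q /\ isGm u)
  (fun R S phi y => let: (q, u, w) := y in (map_poly phi q, phi \o u, phi \o w)).

Definition dbeta (d : nat) (R : comNzRingType) (x : pt (Xbeta d) R)
  : pt (Ybeta d) R :=
  let: (q, u, a, v) := x in
  (q, u, ser_add (ser_mul u (ser_of_poly a)) (ser_mul (ser_of_poly q) v)).

Definition Xalpha (d : nat) : pfun := @PFun
  (fun R => ({poly R} * {poly R} * (nat -> R))%type)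
  (fun R x => let: (q, a, v) := x in isQ d q /\ isA d a)
  (fun R S phi x => let: (q, a, v) := x in (map_poly phi q, map_poly phi a, phi \o v)).

Definition Yalpha (d : nat) : pfun := @PFun
  (fun R => ({poly R} * (nat -> R))%type)
  (fun R y => let: (q, w) := y in isQ d q)
  (fun R S phi y => let: (q, w) := y in (map_poly phi q, phi \o w)).

Definition alpha (d : nat) (R : comNzRingType) (x : pt (Xalpha d) R)
  : pt (Yalpha d) R :=
  let: (q, a, v) := x in (q, ser_add (ser_mul (ser_of_poly q) v) (ser_of_poly a)).

From Stdlib Require Import FunctionalExtensionality.
From HB Require Import structures.
From mathcomp Require Import all_boot all_order all_algebra zify.
Set Implicit Arguments. Unset Strict Implicit. Unset Printing Implicit Defensive.
Import GRing.Theory.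
Local Open Scope ring_scope.

(* Everything reduces to the equation  u a + q v = w  in R[[t]], with u a unit
   series, a polynomial a of degree < d and a series v.  Over any commutative
   ring and for every ideal I, the equation has a solution a, v in I when w is
   in I, as soon as some q_m with m <= d is a unit and q_0, ..., q_(m-1) are
   nilpotent; and u a + q v in I forces a, v in I as soon as q - t^d has
   nilpotent coefficients.  Both properties are triangular systems for
   q = t^m * (unit) and q = t^d, and both survive a perturbation q + c r with
   c nilpotent.  Over an Artinian local k-algebra the residue map has a nil
   kernel, so the first property holds for every q in Q_d and the second
   whenever q lies over t^d.  Lifting along a surjection of Artinian algebras
   is solvability in its kernel, which gives formal smoothness, and the
   second property gives the isomorphisms. *)

Lemma course_of_values_fix (T : Type) (x0 : T) (G : (nat -> T) -> nat -> T) :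
  (forall f g n, (forall i, (i < n)%N -> f i = g i) -> G f n = G g n) ->
  exists f, forall n, f n = G f n.
Proof.
move=> G_ext.
pose approx := fix approx n : nat -> T :=
  if n is n'.+1 then G (approx n') else fun=> x0.
have approx_stable j i : (i < j)%N -> approx j i = approx i.+1 i.
  elim/ltn_ind: j i => -[|j] IH i //= lt_ij.
  apply: G_ext => l lt_li; rewrite (IH j _ l) ?(IH i _ l) //; lia.
exists (fun i => approx i.+1 i) => n /=.
by apply: G_ext => i lt_in; rewrite approx_stable.
Qed.

Section Ideals.
Variable R : comNzRingType.

Definition is_ideal (I : R -> Prop) :=
  [/\ I 0, forall y z, I y -> I z -> I (y + z) & forall c y, I y -> I (c * y)].

Section IdealTheory.
Variables (I : R -> Prop) (idI : is_ideal I).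

Lemma ideal0 : I 0. Proof. by case: idI. Qed.

Lemma idealD y z : I y -> I z -> I (y + z).
Proof. by case: idI => _ I_add _; apply: I_add. Qed.

Lemma idealMl c y : I y -> I (c * y).
Proof. by case: idI => _ _ I_mul; apply: I_mul. Qed.

Lemma idealN y : I y -> I (- y).
Proof. by rewrite -mulN1r; apply: idealMl. Qed.

Lemma idealB y z : I y -> I z -> I (y - z).
Proof. by move=> Iy Iz; apply: idealD Iy (idealN Iz). Qed.

Lemma ideal_sum n (F : 'I_n -> R) : (forall i, I (F i)) -> I (\sum_(i < n) F i).
Proof. by move=> IF; elim/big_ind: _ => //; [exact: ideal0 | exact: idealD]. Qed.

End IdealTheory.

Lemma is_idealT : is_ideal (fun=> True). Proof. by []. Qed.

Lemma is_ideal0 : is_ideal (eq^~ 0).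
Proof. by split=> [|y z -> ->|c y ->]; rewrite ?addr0 ?mulr0. Qed.

Definition mul_ideal (c : R) (I : R -> Prop) : R -> Prop :=
  fun z => exists y, I y /\ z = c * y.

Lemma is_ideal_mul c I : is_ideal I -> is_ideal (mul_ideal c I).
Proof.
move=> idI; split.
- by exists 0; rewrite mulr0; split => //; exact: ideal0.
- move=> _ _ [y [Iy ->]] [z [Iz ->]].
  by exists (y + z); rewrite mulrDr; split => //; exact: idealD.
- move=> b _ [y [Iy ->]].
  by exists (b * y); rewrite mulrCA; split => //; exact: idealMl.
Qed.

Definition add_principal_ideal (I : R -> Prop) (c : R) : R -> Prop :=
  fun z => exists y b, I y /\ z = y + c * b.

Lemma is_ideal_add_principal I c : is_ideal I -> is_ideal (add_principal_ideal I c).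
Proof.
move=> idI; split.
- by exists 0, 0; rewrite mulr0 addr0; split => //; exact: ideal0.
- move=> _ _ [y [b [Iy ->]]] [z [b' [Iz ->]]]; exists (y + z), (b + b').
  by rewrite mulrDr addrACA; split => //; exact: idealD.
- move=> b' _ [y [b [Iy ->]]]; exists (b' * y), (b' * b).
  by rewrite mulrDr mulrCA; split => //; exact: idealMl.
Qed.

End Ideals.

Arguments is_idealT {R}.
Arguments is_ideal0 {R}.

Section PowerSeries.
Variable R : comNzRingType.
Implicit Types (f g h u v w x e : nat -> R) (q r a b : {poly R}).

Definition ser1 : nat -> R := fun n => (n == 0%N)%:R.

Lemma eq_ser_mul f g u v n : f =1 u -> g =1 v -> ser_mul f g n = ser_mul u v n.
Proof. by move=> fu gv; apply: eq_bigr => i _; rewrite fu gv. Qed.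

Lemma ser_mulDl f g h n : ser_mul (f \+ g) h n = ser_mul f h n + ser_mul g h n.
Proof. by rewrite /ser_mul -big_split; apply: eq_bigr => i _; rewrite mulrDl. Qed.

Lemma ser_mulDr f g h n : ser_mul f (g \+ h) n = ser_mul f g n + ser_mul f h n.
Proof. by rewrite /ser_mul -big_split; apply: eq_bigr => i _; rewrite mulrDr. Qed.

Lemma ser_mulZl (c : R) f g n :
  ser_mul (fun m => c * f m) g n = c * ser_mul f g n.
Proof. by rewrite /ser_mul mulr_sumr; apply: eq_bigr => i _; rewrite mulrA. Qed.

Lemma ser_mul1l g n : ser_mul ser1 g n = g n.
Proof.
by rewrite /ser_mul big_ord_recl mul1r subn0 big1 ?addr0 // => i _; rewrite mul0r.
Qed.

Lemma ser_mul_low m f g n :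
  (forall i, (i < m)%N -> f i = 0) -> (n < m)%N -> ser_mul f g n = 0.
Proof.
by move=> f_low lt_nm; apply: big1 => -[i /= lt_in] _; rewrite f_low ?mul0r //; lia.
Qed.

Lemma ser_mul_shift m f g n : (forall i, (i < m)%N -> f i = 0) ->
  ser_mul f g (n + m) = ser_mul (fun j => f (j + m)%N) g n.
Proof.
move=> f_low; rewrite /ser_mul.
rewrite -(big_mkord xpredT (fun i => f i * g (n + m - i)%N)).
rewrite -(big_mkord xpredT (fun i => f (i + m)%N * g (n - i)%N)).
rewrite (@big_cat_nat _ _ _ m 0 (n + m).+1) //=; last by lia.
rewrite big_nat_cond big1 ?add0r; last first.
  by move=> i /andP[/andP[_ lt_im] _]; rewrite f_low ?mul0r.
rewrite -{1}[m]add0n big_addn.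
have -> : ((n + m).+1 - m = n.+1)%N by lia.
by apply: eq_bigr => i _; rewrite subnDr.
Qed.

Lemma ser_mul_trunc f g m n :
  (n < m)%N -> ser_mul f (ser_of_poly (\poly_(i < m) g i)) n = ser_mul f g n.
Proof.
move=> lt_nm; apply: eq_bigr => -[i /= lt_in] _.
by rewrite /ser_of_poly coef_poly ifT //; lia.
Qed.

Section SeriesInIdeal.
Variables (I : R -> Prop) (idI : is_ideal I).

Lemma ideal_ser_mul f g n : (forall m, I (g m)) -> I (ser_mul f g n).
Proof. by move=> Ig; apply: (ideal_sum idI) => i; apply: (idealMl idI). Qed.

Lemma ser_mul_solve c wc e : c 0%N * wc = 1 -> (forall n, I (e n)) ->
  exists x, (forall n, I (x n)) /\ ser_mul c x =1 e.
Proof.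
move=> c0_unit Ie.
pose G x n := wc * (e n - \sum_(i < n) c i.+1 * x (n - i.+1)%N).
have [x xE] : exists x, forall n, x n = G x n.
  apply: (course_of_values_fix 0) => f g n fg; congr (_ * (_ - _)).
  by apply: eq_bigr => -[i /= lt_in] _; rewrite fg //; lia.
exists x; split.
  elim/ltn_ind=> n IH; rewrite xE; apply: (idealMl idI); apply: (idealB idI) => //.
  by apply: (ideal_sum idI) => -[i /= lt_in]; apply: (idealMl idI); apply: IH; lia.
move=> n; rewrite /ser_mul big_ord_recl subn0 xE mulrA c0_unit mul1r.
by rewrite subrK.
Qed.

Lemma ser_mul_ideal_inv c wc x N : c 0%N * wc = 1 ->
  (forall n, (n < N)%N -> I (ser_mul c x n)) -> forall n, (n < N)%N -> I (x n).
Proof.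
move=> c0_unit Icx; elim/ltn_ind=> n IH lt_nN.
have := Icx n lt_nN; rewrite /ser_mul big_ord_recl subn0 => I_sum.
rewrite -[x n]mul1r -c0_unit mulrAC mulrC; apply: (idealMl idI).
rewrite -(addrK (\sum_(i < n) c (bump 0 i) * x (n - bump 0 i)%N) (c 0%N * x n)).
apply: (idealB idI) => //; apply: (ideal_sum idI) => -[i /= lt_in].
by apply: (idealMl idI); apply: IH; rewrite /bump /=; lia.
Qed.

End SeriesInIdeal.

Definition uaqv q u a v : nat -> R :=
  ser_add (ser_mul u (ser_of_poly a)) (ser_mul (ser_of_poly q) v).

Lemma uaqvD q u a v b x n :
  uaqv q u (a + b) (v \+ x) n = uaqv q u a v n + uaqv q u b x n.
Proof.
have ab_coef : ser_of_poly (a + b) =1 ser_of_poly a \+ ser_of_poly b.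
  by move=> m; rewrite /ser_of_poly coefD.
rewrite /uaqv /ser_add (eq_ser_mul n (frefl u) ab_coef) !ser_mulDr.
by rewrite addrACA.
Qed.

Lemma uaqv0 q u n : uaqv q u 0 (fun=> 0) n = 0.
Proof.
rewrite /uaqv /ser_add /ser_mul !big1 ?addr0 // => i _;
  by rewrite /ser_of_poly ?coef0 mulr0.
Qed.

Lemma uaqv_perturb q u a v (c : R) r n :
  uaqv (q + c *: r) u a v n = uaqv q u a v n + c * ser_mul (ser_of_poly r) v n.
Proof.
rewrite /uaqv /ser_add -addrA -ser_mulZl -ser_mulDl; congr (_ + _).
by apply: eq_ser_mul => // m; rewrite /ser_of_poly coefD coefZ.
Qed.

Definition solvable_in (I : R -> Prop) q u d := forall e, (forall n, I (e n)) ->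
  exists a v, [/\ (size a <= d)%N, forall n, I a`_n, forall n, I (v n) &
                  uaqv q u a v =1 e].

Definition surj_mod_ideals q u d := forall I, is_ideal I -> solvable_in I q u d.

Definition inj_mod_ideals q u d := forall I, is_ideal I ->
  forall a v, (size a <= d)%N -> (forall n, I (uaqv q u a v n)) ->
  (forall n, I a`_n) /\ (forall n, I (v n)).

Lemma surj_mod_ideals_base q u d m wq : isGm u -> (m <= d)%N ->
  (forall i, (i < m)%N -> q`_i = 0) -> q`_m * wq = 1 -> surj_mod_ideals q u d.
Proof.
move=> [wu u0_unit] le_md q_low qm_unit I idI e Ie.
have [x [Ix ux]] := ser_mul_solve idI u0_unit Ie.
pose a := \poly_(i < m) x i.
have Ia n : I a`_n by rewrite coef_poly; case: ifP => _; [exact: Ix | exact: ideal0].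
(* Below degree m only u a is seen; above it, q v = e - u a is triangular in
   the shifted coefficients of q, whose constant term q_m is a unit. *)
pose e' n := e (n + m)%N - ser_mul u (ser_of_poly a) (n + m).
have Ie' n : I (e' n) by apply: (idealB idI) => //; apply: (ideal_ser_mul idI).
have [v [Iv qv]] := ser_mul_solve (c := fun j => q`_(j + m)) idI qm_unit Ie'.
exists a, v; split => // [|n]; first exact: leq_trans (size_poly _ _) le_md.
rewrite /uaqv /ser_add; have [lt_nm | le_mn] := ltnP n m.
  by rewrite (ser_mul_low (f := ser_of_poly q) _ q_low lt_nm) addr0 ser_mul_trunc.
by rewrite -(subnK le_mn) (ser_mul_shift _ _ q_low) qv /e' addrC subrK.
Qed.

Lemma inj_mod_ideals_Xn u d : isGm u -> inj_mod_ideals 'X^d u d.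
Proof.
move=> [wu u0_unit] I idI a v Sa I_uaqv.
have Xd_low i : (i < d)%N -> ser_of_poly ('X^d : {poly R}) i = 0.
  by move=> lt_id; rewrite /ser_of_poly coefXn; case: eqP => // eq_id; lia.
have Xd_shift : (fun i => ('X^d : {poly R})`_(i + d)) =1 ser1.
  by move=> i; rewrite coefXn -{2}[d]add0n eqn_add2r.
have Ia n : I a`_n.
  have [lt_nd | le_dn] := ltnP n d; last first.
    by rewrite nth_default ?(leq_trans Sa) //; exact: ideal0.
  apply: (ser_mul_ideal_inv idI u0_unit _ lt_nd) => m lt_md.
  by have := I_uaqv m; rewrite /uaqv /ser_add (ser_mul_low _ Xd_low lt_md) addr0.
split=> // j; have := I_uaqv (j + d)%N.
rewrite /uaqv /ser_add (ser_mul_shift _ _ Xd_low).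
rewrite (eq_ser_mul j Xd_shift (frefl v)) ser_mul1l => I_sum.
rewrite -(addKr (ser_mul u (ser_of_poly a) (j + d)) (v j)).
by apply: (idealD idI) I_sum; apply: (idealN idI); apply: (ideal_ser_mul idI).
Qed.

Lemma surj_mod_ideals_perturb q u d c r p : c ^+ p = 0 ->
  surj_mod_ideals q u d -> surj_mod_ideals (q + c *: r) u d.
Proof.
move=> c_nil surj_q I idI.
pose J j := mul_ideal (c ^+ j) I.
have idJ j : is_ideal (J j) by exact: is_ideal_mul.
have J_succ j z : J j.+1 z -> J j z.
  case=> y [Iy ->]; exists (c * y); rewrite exprS mulrCA mulrA.
  by split => //; exact: idealMl.
(* A solution for q modulo c^j I solves for q + c r up to the error c (r v),
   which lies in c^(j+1) I; and c^j I = 0 once j >= p. *)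
have solve_in k j : (p <= j + k)%N -> solvable_in (J j) (q + c *: r) u d.
  elim: k j => [|k IH] j le_p e Je.
    exists 0, (fun=> 0); split=> [|n|n|n]; rewrite ?size_poly0 ?coef0 ?uaqv0 //.
    - exact: ideal0.
    - exact: ideal0.
    - have [y [_ ->]] := Je n.
      by rewrite -(subnK (_ : p <= j)%N) ?exprD ?c_nil ?mulr0 ?mul0r //; lia.
  have [a [v [Sa Ja Jv sol]]] := surj_q _ (idJ j) e Je.
  pose err n := c * ser_mul (ser_of_poly r) v n.
  have Jerr n : J j.+1 (- err n).
    rewrite /err; have [y [Iy ->]] := ideal_ser_mul (idJ j) (ser_of_poly r) n Jv.
    by exists (- y); rewrite mulrN exprS mulrA; split => //; exact: idealN.
  have [|a' [v' [Sa' Ja' Jv' sol']]] := IH j.+1 _ _ Jerr; first by lia.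
  exists (a + a'), (v \+ v'); split => [|n|n|n].
  - by rewrite (leq_trans (size_polyD _ _)) // geq_max Sa Sa'.
  - by rewrite coefD; apply: (idealD (idJ j)) => //; exact: J_succ.
  - by apply: (idealD (idJ j)) => //; exact: J_succ.
  - by rewrite uaqvD sol' uaqv_perturb sol addrK.
move=> e Ie; have [|a [v [Sa Ja Jv sol]]] := solve_in p 0%N (leq_addl _ _) e.
  by move=> n; exists (e n); rewrite mul1r.
have J0 z : J 0%N z -> I z by case=> y [Iy ->]; rewrite mul1r.
by exists a, v; split => // n; apply: J0.
Qed.

Lemma inj_mod_ideals_perturb q u d c r p : c ^+ p = 0 ->
  inj_mod_ideals q u d -> inj_mod_ideals (q + c *: r) u d.
Proof.
move=> c_nil inj_q I idI a v Sa I_uaqv.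
pose K j := add_principal_ideal I (c ^+ j).
have idK j : is_ideal (K j) by exact: is_ideal_add_principal.
have IK j z : I z -> K j z by exists z, 0; rewrite mulr0 addr0.
(* If v lies in I + (c^j), then u a + q v = (u a + (q + c r) v) - c (r v)
   lies in I + (c^(j+1)), hence so do a and v; and c^p = 0. *)
have Kav j : (forall n, K j a`_n) /\ (forall n, K j (v n)).
  elim: j => [|j [_ Kv]].
    by split=> n; [exists 0, a`_n | exists 0, (v n)];
      rewrite mul1r add0r; split=> //; exact: ideal0.
  apply: (inj_q _ (idK j.+1) a v Sa) => n.
  rewrite -(addrK (c * ser_mul (ser_of_poly r) v n) (uaqv q u a v n)).
  rewrite -uaqv_perturb; apply: (idealB (idK _)); first exact: IK.
  have [y [b [Iy ->]]] := ideal_ser_mul (idK j) (ser_of_poly r) n Kv.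
  by exists (c * y), b; rewrite mulrDr exprS mulrA; split => //; exact: idealMl.
have [Ka Kv] := Kav p.
by split=> n; [case: (Ka n) | case: (Kv n)] => y [b [Iy ->]];
  rewrite c_nil mul0r addr0.
Qed.

Lemma nilpotent_perturb_ind (P : {poly R} -> Prop) q r :
  (forall q' c s p, c ^+ p = 0 -> P q' -> P (q' + c *: s)) ->
  (forall i, exists p, r`_i ^+ p = 0) -> P q -> P (q + r).
Proof.
move=> P_perturb r_nil Pq; rewrite -[r]coefK poly_def.
elim/big_rec: _ => [|i s _ Ps]; first by rewrite addr0.
have [p ri_nil] := r_nil i.
by rewrite addrCA addrC; exact: P_perturb ri_nil Ps.
Qed.

Lemma surj_mod_ideals_lowest q u d m wq : isGm u -> (m <= d)%N ->
  (forall i, (i < m)%N -> exists p, q`_i ^+ p = 0) -> q`_m * wq = 1 ->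
  surj_mod_ideals q u d.
Proof.
move=> Gu le_md low_nil qm_unit; rewrite -(subrK (take_poly m q) q).
apply: (nilpotent_perturb_ind (P := fun q' => surj_mod_ideals q' u d)).
- by move=> q' c s p c_nil; exact: surj_mod_ideals_perturb c_nil.
- move=> i; rewrite coef_take_poly; case: ifP => [/low_nil //|_].
  by exists 1%N; rewrite expr1.
apply: (surj_mod_ideals_base (wq := wq) Gu le_md) => [i lt_im|].
  by rewrite coefB coef_take_poly lt_im subrr.
by rewrite coefB coef_take_poly ltnn subr0.
Qed.

Lemma inj_mod_ideals_nilpotent q u d : isGm u ->
  (forall i, exists p, (q - 'X^d)`_i ^+ p = 0) -> inj_mod_ideals q u d.
Proof.
move=> Gu nil; rewrite -(subrK 'X^d q) addrC.
apply: (nilpotent_perturb_ind (P := fun q' => inj_mod_ideals q' u d)) nil _.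
  by move=> q' c s p c_nil; exact: inj_mod_ideals_perturb c_nil.
exact: inj_mod_ideals_Xn.
Qed.

Lemma uaqv_inj q u d a1 v1 a2 v2 : inj_mod_ideals q u d ->
  (size a1 <= d)%N -> (size a2 <= d)%N ->
  uaqv q u a1 v1 =1 uaqv q u a2 v2 -> a1 = a2 /\ v1 = v2.
Proof.
move=> inj_q S1 S2 eq12.
have S12 : (size (a1 - a2)%R <= d)%N.
  by rewrite (leq_trans (size_polyD _ _)) // size_polyN geq_max S1 S2.
have [|a12 v12] := inj_q _ is_ideal0 _ (v1 \- v2) S12.
  move=> n; apply: (addIr (uaqv q u a2 v2 n)); rewrite -uaqvD add0r subrK.
  have -> : (v1 \- v2) \+ v2 = v1.
    by apply: functional_extensionality => m; exact: subrK.
  exact: eq12.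
split; first by apply/polyP => i; apply/eqP; rewrite -subr_eq0 -coefB a12.
apply: functional_extensionality => n.
by apply/eqP; rewrite -subr_eq0; apply/eqP/v12.
Qed.

End PowerSeries.

Arguments ser1 {R}.

Lemma map_uaqv (R S : comNzRingType) (f : {rmorphism R -> S}) (q : {poly R})
    (u : nat -> R) (a : {poly R}) (v : nat -> R) n :
  f (uaqv q u a v n) = uaqv (map_poly f q) (f \o u) (map_poly f a) (f \o v) n.
Proof.
rewrite /uaqv /ser_add /ser_mul rmorphD !rmorph_sum.
by congr (_ + _); apply: eq_bigr => i _; rewrite rmorphM /ser_of_poly /= coef_map.
Qed.

Lemma uaqv_lift (R S : comNzRingType) (phi : {rmorphism R -> S}) (q : {poly R})
    (u w : nat -> R) d (aS : {poly S}) (vS : nat -> S) :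
  (forall s, exists r, phi r = s) -> surj_mod_ideals q u d -> (size aS <= d)%N ->
  uaqv (map_poly phi q) (phi \o u) aS vS =1 phi \o w ->
  exists (a : {poly R}) (v : nat -> R),
    [/\ (size a <= d)%N, map_poly phi a = aS, phi \o v =1 vS & uaqv q u a v =1 w].
Proof.
move=> phi_surj surj_q SaS solS.
have lift s : {r | phi r == s}.
  by apply: (@sigW R); have [r <-] := phi_surj s; exists r.
have phi_lift s : phi (sval (lift s)) = s by apply/eqP; exact: (svalP (lift s)).
pose a0 := \poly_(i < d) sval (lift aS`_i).
pose v0 n := sval (lift (vS n)).
have a0E : map_poly phi a0 = aS.
  apply/polyP => i; rewrite coef_map_id0 ?rmorph0 // coef_poly.
  case: ltnP => [_|le_di]; first exact: phi_lift.
  by rewrite rmorph0 nth_default // (leq_trans SaS).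
have v0E : phi \o v0 = vS by apply: functional_extensionality => n; exact: phi_lift.
have ker_ideal : is_ideal (fun z => phi z = 0).
  split=> [|y z yK zK|c y yK]; first exact: rmorph0.
    by rewrite rmorphD yK zK addr0.
  by rewrite rmorphM yK mulr0.
have [|da [dv [Sda Kda Kdv dsol]]] := surj_q _ ker_ideal (w \- uaqv q u a0 v0).
  by move=> n; rewrite /= rmorphB map_uaqv a0E v0E solS subrr.
exists (a0 + da), (v0 \+ dv); split => [|||n].
- by rewrite (leq_trans (size_polyD _ _)) // geq_max Sda (leq_trans (size_poly _ _)).
- apply/polyP => i; rewrite coef_map_id0 ?rmorph0 // coefD rmorphD Kda addr0.
  by rewrite -a0E coef_map_id0 ?rmorph0.
- by move=> n; rewrite /= rmorphD Kdv addr0 phi_lift.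
- by rewrite uaqvD dsol /= addrC subrK.
Qed.

Lemma isQ_coef_deg d (R : comNzRingType) (q : {poly R}) : isQ d q -> q`_d = 1.
Proof. by case=> /monicP <- size_q; rewrite lead_coefE size_q. Qed.

Section ResidueField.
Variables (R : comNzRingType) (K : fieldType) (f : {rmorphism R -> K}).
Hypotheses (f_surj : forall c, exists x, f x = c)
           (ker_nil : forall x, f x = 0 -> exists p, x ^+ p = 0).

Lemma unit_of_residue_neq0 x : f x != 0 -> exists w, x * w = 1.
Proof.
move=> fx_neq0; have [y fy] := f_surj (f x)^-1.
(* x y = 1 - z with z nilpotent is inverted by the geometric series in z. *)
have [p z_nil] : exists p, (1 - x * y) ^+ p = 0.
  by apply: ker_nil; rewrite rmorphB rmorph1 rmorphM fy mulfV ?subrr.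
exists (y * \sum_(i < p) (1 - x * y) ^+ i).
by rewrite mulrA -{1}[x * y](subKr 1) -opprB mulNr -subrX1 z_nil sub0r opprK.
Qed.

Lemma surj_mod_ideals_residue (q : {poly R}) u d m : isGm u -> (m <= d)%N ->
  f q`_m != 0 -> surj_mod_ideals q u d.
Proof.
move=> Gu le_md fqm_neq0.
have [l fql_neq0 l_min] := ex_minnP (ex_intro (fun i => f q`_i != 0) m fqm_neq0).
have [wq ql_unit] := unit_of_residue_neq0 fql_neq0.
have le_ld := leq_trans (l_min m fqm_neq0) le_md.
apply: (surj_mod_ideals_lowest (wq := wq) Gu le_ld) => // i lt_il.
by apply: ker_nil; move: lt_il; apply: contraTeq => /l_min; rewrite leqNgt.
Qed.

Lemma surj_mod_ideals_monic (q : {poly R}) u d : isGm u -> isQ d q ->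
  surj_mod_ideals q u d.
Proof.
move=> Gu Qq; apply: (surj_mod_ideals_residue Gu (leqnn d)).
by rewrite (isQ_coef_deg Qq) rmorph1 oner_neq0.
Qed.

Lemma inj_mod_ideals_residue (q : {poly R}) u d : isGm u ->
  map_poly f q = 'X^d -> inj_mod_ideals q u d.
Proof.
move=> Gu fq; apply: inj_mod_ideals_nilpotent Gu _ => i; apply: ker_nil.
have /= fqi := congr1 (fun p : {poly K} => p`_i) fq.
rewrite coef_map_id0 ?rmorph0 // in fqi.
by rewrite coefB rmorphB fqi !coefXn rmorph_nat subrr.
Qed.

End ResidueField.

Lemma surj_mod_ideals_field (K : fieldType) (q : {poly K}) (u : nat -> K) d :
  isGm u -> isQ d q -> surj_mod_ideals q u d.
Proof.
apply: (surj_mod_ideals_monic (f := idfun)) => [c|x x0]; first by exists c.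
by exists 1%N; rewrite expr1.
Qed.

Section ArtinLocal.
Variables (k : fieldType) (A : comAlgType k) (eps : A -> k).
Hypothesis art : art_k eps.

Lemma residue_nmod_morphism : nmod_morphism eps.
Proof.
case: art => -[epsD _] _ _ _ _; split=> //.
by apply: (addIr (eps 0)); rewrite -epsD !add0r.
Qed.

Lemma residue_monoid_morphism : monoid_morphism eps.
Proof. by case: art => -[_ epsM] eps1 _ _ _. Qed.

HB.instance Definition _ := GRing.isNmodMorphism.Build A k eps residue_nmod_morphism.
HB.instance Definition _ :=
  GRing.isMonoidMorphism.Build A k eps residue_monoid_morphism.

Definition residue : {rmorphism A -> k} := eps.

Lemma residue_scale1 c : eps c%:A = c.
Proof. by case: art => _ _ epsZ _ _; rewrite epsZ rmorph1 mulr1. Qed.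

Lemma residue_surj c : exists a, eps a = c.
Proof. by exists c%:A; exact: residue_scale1. Qed.

Lemma residue_ker_nil a : eps a = 0 -> exists p, a ^+ p = 0.
Proof. by case: art => _ _ _ nil _; exact: nil. Qed.

Lemma surj_mod_ideals_art (q : {poly A}) (u : nat -> A) d :
  isGm u -> isQ d q -> surj_mod_ideals q u d.
Proof. exact: (surj_mod_ideals_monic residue_surj residue_ker_nil). Qed.

Lemma inj_mod_ideals_art (q : {poly A}) (u : nat -> A) d :
  isGm u -> map_poly eps q = 'X^d -> inj_mod_ideals q u d.
Proof. exact: (inj_mod_ideals_residue residue_ker_nil). Qed.

End ArtinLocal.

Lemma residue_comp (k : fieldType) (A B : comAlgType k) (epsA : A -> k)
    (epsB : B -> k) (phi : {lrmorphism A -> B}) :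
  art_k epsA -> art_k epsB -> forall a, epsB (phi a) = epsA a.
Proof.
move=> artA artB a.
have [p nil] : exists p, (a - (epsA a)%:A) ^+ p = 0.
  apply: (residue_ker_nil artA); change (residue artA (a - (epsA a)%:A) = 0).
  by rewrite rmorphB /= (residue_scale1 artA) subrr.
have : residue artB (phi (a - (epsA a)%:A)) ^+ p = 0.
  by rewrite -!rmorphXn nil !rmorph0.
move/eqP; rewrite expf_eq0 => /andP[_ /eqP].
by rewrite !rmorphB /= rmorph_alg (residue_scale1 artB) => /subr0_eq.
Qed.

Lemma bc_dbeta d (R S : comNzRingType) (f : {rmorphism R -> S}) (y : pt (Xbeta d) R) :
  bc f (dbeta y) = dbeta (bc f y).
Proof.
case: y => [[[q u] a] v] /=; congr (_, _).
by apply: functional_extensionality => n; exact: map_uaqv.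
Qed.

Lemma bc_Xbeta_comp d (R S T : comNzRingType) (g : {rmorphism S -> T})
    (f : {rmorphism R -> S}) (h : R -> T) (y : pt (Xbeta d) R) :
  g \o f =1 h -> bc g (bc f y) = bc h y.
Proof.
case: y => [[[q u] a] v] gfh /=.
have gf_poly p : map_poly g (map_poly f p) = map_poly h p.
  by rewrite -map_poly_comp; apply: eq_map_poly.
by rewrite !gf_poly; congr (_, _, _, _); apply: functional_extensionality => n;
  apply: gfh.
Qed.

Lemma dbeta_surj d (k : fieldType) : surj_kpts (@dbeta d) k.
Proof.
move=> [[q u] w] [Qq Gu].
have surj_q := surj_mod_ideals_field Gu Qq.
have [a [v [Sa _ _ sol]]] := surj_q _ is_idealT w (fun=> I).
exists (q, u, a, v); split => //=; congr (_, _).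
exact: functional_extensionality sol.
Qed.

Lemma dbeta_smooth d (k : fieldType) (x : pt (Xbeta d) k) :
  ok x -> fsmooth_hat (@dbeta d) x.
Proof.
move=> _ A B epsA epsB phi artA artB phi_surj [[[qB uB] aB] vB] [[qA uA] wA].
move=> [[_ _ SaB] yBx] [[QA GA] _] [qBE uBE solB]; subst qB uB.
have surj_qA := surj_mod_ideals_art artA GA QA.
have [aA [vA [SaA aAE vAE solA]]] :=
  uaqv_lift phi_surj surj_qA SaB (fun n => congr1 (@^~ n) solB).
pose yA : pt (Xbeta d) A := (qA, uA, aA, vA).
have yAyB : bc phi yA = (map_poly phi qA, phi \o uA, aB, vB).
  by rewrite /= aAE; congr (_, _); exact: functional_extensionality vAE.
exists yA; split => //.
- split; first by split.
  by rewrite -yBx -yAyB; apply/esym/bc_Xbeta_comp; exact: residue_comp.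
- by rewrite /=; congr (_, _); exact: functional_extensionality solA.
Qed.

Lemma dbeta_iso d (k : fieldType) (x : pt (Xbeta d) k) :
  ok x -> x.1.1.1 = 'X^d -> iso_hat (@dbeta d) x.
Proof.
move: x => [[[q0 u0] a0] v0] [_ G0 Sa0] /= q0E A eps art; subst q0.
split.
- move=> y [oky yx]; split; last by rewrite (bc_dbeta (residue art)) yx.
  by move: y oky {yx} => [[[q u] a] v] [].
- move=> [[[q1 u1] a1] v1] [[[q2 u2] a2] v2] [[_ G1 Sa1] [q1E _ _ _]] [[_ _ Sa2] _].
  case=> <- <- /(congr1 (@^~ _)) sol.
  have inj_q1 := inj_mod_ideals_art art G1 q1E.
  by have [-> ->] := uaqv_inj inj_q1 Sa1 Sa2 sol.
- move=> [[qA uA] wA] [[QA GA] [qAE uAE wAE]].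
  have surj_qA := surj_mod_ideals_art art GA QA.
  have [a [v [Sa _ _ sol]]] := surj_qA _ is_idealT wA (fun=> I).
  pose y : pt (Xbeta d) A := (qA, uA, a, v).
  have dbeta_y : dbeta y = (qA, uA, wA).
    by rewrite /=; congr (_, _); exact: functional_extensionality sol.
  exists y; split => //; split; first by split.
  have inj_Xd : inj_mod_ideals 'X^d u0 d := inj_mod_ideals_Xn G0.
  have Sa_eps : (size (map_poly eps a) <= d)%N := leq_trans (size_poly _ _) Sa.
  have [<- <-] : map_poly eps a = a0 /\ eps \o v = v0.
    apply: (uaqv_inj inj_Xd Sa_eps Sa0) => n.
    rewrite -{1}qAE -{1}uAE -(map_uaqv (residue art)) sol.
    exact: (congr1 (@^~ n) wAE).
  by rewrite /= qAE uAE.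
Qed.

(* alpha_d is d beta_d restricted to the slice u = 1 (dbeta_embX). *)
Definition embX d (R : comNzRingType) (x : pt (Xalpha d) R) : pt (Xbeta d) R :=
  let: (q, a, v) := x in (q, ser1, a, v).

Definition embY d (R : comNzRingType) (y : pt (Yalpha d) R) : pt (Ybeta d) R :=
  let: (q, w) := y in (q, ser1, w).

Arguments embX {d R}.
Arguments embY {d R}.

Lemma dbeta_embX d (R : comNzRingType) (x : pt (Xalpha d) R) :
  dbeta (embX x) = embY (alpha x).
Proof.
case: x => [[q a] v] /=; congr (_, _); apply: functional_extensionality => n.
by rewrite /ser_add ser_mul1l addrC.
Qed.

Lemma embX_inj d (R : comNzRingType) : injective (@embX d R).
Proof. by move=> [[q a] v] [[q' a'] v'] [-> -> ->]. Qed.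

Lemma embY_inj d (R : comNzRingType) : injective (@embY d R).
Proof. by move=> [q w] [q' w'] [-> ->]. Qed.

Lemma dbeta_eq_embY d (R : comNzRingType) (y : pt (Xbeta d) R) (z : pt (Yalpha d) R) :
  dbeta y = embY z -> exists x, y = embX x.
Proof. by case: y z => [[[q u] a] v] [q' w] [_ -> _]; exists (q, a, v). Qed.

Lemma isGm_ser1 (R : comNzRingType) : isGm (@ser1 R).
Proof. by exists 1; rewrite mulr1. Qed.

Lemma ok_embX d (R : comNzRingType) (x : pt (Xalpha d) R) : ok (embX x) <-> ok x.
Proof.
case: x => [[q a] v]; split=> [[Qq _ Sa]|[Qq Sa]]; split=> //.
exact: isGm_ser1.
Qed.

Lemma ok_embY d (R : comNzRingType) (y : pt (Yalpha d) R) : ok (embY y) <-> ok y.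
Proof. by case: y => [q w]; split=> [[]|Qq] //; split=> //; exact: isGm_ser1. Qed.

Lemma map_ser1 (R S : comNzRingType) (f : {rmorphism R -> S}) : f \o ser1 = ser1.
Proof. by apply: functional_extensionality => n; rewrite /= rmorph_nat. Qed.

Lemma bc_embX d (R S : comNzRingType) (f : {rmorphism R -> S}) (x : pt (Xalpha d) R) :
  bc f (embX x) = embX (bc f x).
Proof. by case: x => [[q a] v]; rewrite /= map_ser1. Qed.

Lemma bc_embY d (R S : comNzRingType) (f : {rmorphism R -> S}) (y : pt (Yalpha d) R) :
  bc f (embY y) = embY (bc f y).
Proof. by case: y => [q w]; rewrite /= map_ser1. Qed.

Lemma hat_embX d (k : fieldType) (A : comAlgType k) (eps : A -> k) (art : art_k eps)
    (x : pt (Xalpha d) k) (y : pt (Xalpha d) A) :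
  hat (embX x) eps (embX y) <-> hat x eps y.
Proof.
rewrite /hat (bc_embX (residue art)).
by split=> -[/ok_embX oky bc_y]; split=> //; [exact: embX_inj | rewrite bc_y].
Qed.

Lemma hat_embY d (k : fieldType) (A : comAlgType k) (eps : A -> k) (art : art_k eps)
    (x : pt (Yalpha d) k) (y : pt (Yalpha d) A) :
  hat (embY x) eps (embY y) <-> hat x eps y.
Proof.
rewrite /hat (bc_embY (residue art)).
by split=> -[/ok_embY oky bc_y]; split=> //; [exact: embY_inj | rewrite bc_y].
Qed.

Lemma alpha_surj d (k : fieldType) : surj_kpts (@alpha d) k.
Proof.
move=> z /ok_embY okz; have [y [oky yz]] := dbeta_surj okz.
have [x yE] := dbeta_eq_embY yz; subst y.
exists x; split; first exact/ok_embX.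
by apply: embY_inj; rewrite -dbeta_embX.
Qed.

Lemma alpha_smooth d (k : fieldType) (x : pt (Xalpha d) k) :
  ok x -> fsmooth_hat (@alpha d) x.
Proof.
move=> /ok_embX okx A B epsA epsB phi artA artB phi_surj yB zA.
move=> /(hat_embX artB) hat_yB; rewrite -(hat_embY artA) -dbeta_embX => hat_zA.
move=> /(congr1 embY); rewrite -dbeta_embX -bc_embY => sol.
have [yA [hat_yA yAyB yAzA]] := dbeta_smooth okx artA artB phi_surj hat_yB hat_zA sol.
have [xA yAE] := dbeta_eq_embY yAzA; subst yA.
exists xA; split.
- exact/(hat_embX artA).
- by apply: embX_inj; rewrite -bc_embX.
- by apply: embY_inj; rewrite -dbeta_embX.
Qed.

Lemma alpha_iso d (k : fieldType) (x : pt (Xalpha d) k) :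
  ok x -> x.1.1 = 'X^d -> iso_hat (@alpha d) x.
Proof.
case: x => [[q a] v] /ok_embX okx /= qE A eps art.
have [hat_map hat_inj hat_surj] := dbeta_iso okx qE art.
split.
- move=> y /(hat_embX art) /hat_map.
  by rewrite !dbeta_embX => /(hat_embY art).
- move=> y1 y2 /(hat_embX art) hat1 /(hat_embX art) hat2 y12.
  by apply: embX_inj; apply: hat_inj hat1 hat2 _; rewrite !dbeta_embX y12.
- move=> z /(hat_embY art); rewrite -dbeta_embX => /hat_surj [y [hat_y yz]].
  have [x yE] := dbeta_eq_embY yz; subst y.
  exists x; split; first exact/(hat_embX art).
  by apply: embY_inj; rewrite -dbeta_embX.
Qed.

Theorem proposition4p1 (k : fieldType) (d : nat) :
  (surj_kpts (@dbeta d) k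
   /\ (forall x : pt (Xbeta d) k, ok x -> fsmooth_hat (@dbeta d) x)
   /\ (forall x : pt (Xbeta d) k, ok x -> x.1.1.1 = 'X^d ->
         iso_hat (@dbeta d) x))
  /\
  (surj_kpts (@alpha d) k
   /\ (forall x : pt (Xalpha d) k, ok x -> fsmooth_hat (@alpha d) x)
   /\ (forall x : pt (Xalpha d) k, ok x -> x.1.1 = 'X^d ->
         iso_hat (@alpha d) x)).
Proof.
split; split; [exact: dbeta_surj | split | exact: alpha_surj | split].
- exact: dbeta_smooth.
- exact: dbeta_iso.
- exact: alpha_smooth.
- exact: alpha_iso.
Qed.
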